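(* Let $A\in\mathbb{R}^{n\times d}$, let $f:\mathbb{R}^n\to\mathbb{R}\cup\{+\infty\}$ and $g:\mathbb{R}^d\to\mathbb{R}\cup\{+\infty\}$ be closed convex functions, and suppose $f$ is $(1/\gamma)$-smooth for some $\gamma\ge 0$ and $g$ is $\mu$-strongly convex for some $\mu\ge 0$. Let $R=\|A\|_2$ and $F(x,y)=g(x)+\langle y,Ax\rangle-f^*(y)$. Run the DAPD method (described in the context) for $T\ge 1$ iterations with positive step sizes satisfying, for all $t=0,\dots,T-1$, $$\eta_t(1+B_{t-1}\mu)\ge \beta_t,\qquad \eta_t\tau_t\le \frac{1}{R^2},\qquad \frac{\beta_{t+1}}{\tau_{t+1}}\le \frac{\beta_t}{\tau_t}(1+\gamma\tau_t).$$ Define $\hat{x}^T=\frac{1}{B_{T-1}}\sum_{t=0}^{T-1}\beta_t\bar{x}^{t+1}$ and $\hat{y}^T=\frac{1}{B_{T-1}}\sum_{t=0}^{T-1}\beta_t y^{t+1}$. Then for every $x\in\mathbb{R}^d$ and $y\in\mathbb{R}^n$, $$F(\hat{x}^T,y)-F(x,\hat{y}^T)\le \frac{1}{B_{T-1}}\left(\frac{\beta_0}{2\tau_0}\|y^0-y\|_2^2+\frac12\|x^0-x\|_2^2\right).$$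
   Context: $f^*$ denotes the convex conjugate of $f$; $\operatorname{prox}_h(u)=\arg\min_v\{h(v)+\frac12\|v-u\|_2^2\}$. ''$f$ is $(1/\gamma)$-smooth with $\gamma\ge0$'' is the paper's convention: $\gamma=0$ means $f$ need not be smooth; $\gamma>0$ means $f$ is differentiable with $(1/\gamma)$-Lipschitz gradient. $\mu=0$ means $g$ is merely convex. DAPD method: given initial points $x^0\in\mathbb{R}^d$, $y^0\in\mathbb{R}^n$ and positive step sizes $\{\beta_t\},\{\eta_t\},\{\tau_t\}$, set $B_t=\sum_{k=0}^t\beta_k$ (with $B_{-1}=0$) and for $t=0,1,2,\dots$ compute $\bar{x}^{t+1}=\operatorname{prox}_{\eta_t g}(x^t-\eta_t A^\top y^t)$, $y^{t+1}=\operatorname{prox}_{\tau_t f^*}(y^t+\tau_t A\bar{x}^{t+1})$, $x^{t+1}=\operatorname{prox}_{B_t g}\big(x^0-\sum_{k=0}^t\beta_k A^\top y^{k+1}\big)$. *)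

From HB Require Import structures.
From mathcomp Require Import all_boot all_order all_algebra.
From mathcomp Require Import all_classical all_reals all_analysis.
Set Implicit Arguments. Unset Strict Implicit. Unset Printing Implicit Defensive.
Import Order.TTheory GRing.Theory Num.Theory.
Import numFieldNormedType.Exports.
Local Open Scope classical_set_scope.
Local Open Scope ring_scope.

Section DAPDDefs.
Variable R : realType.

Definition dot (k : nat) (u v : 'cV[R]_k) : R := \sum_(i < k) u i 0 * v i 0.
Definition norm2 (k : nat) (u : 'cV[R]_k) : R := Num.sqrt (dot u u).

Definition opnorm2 (m k : nat) (A : 'M[R]_(m, k)) : R :=
  sup [set norm2 (A *m v) | v in [set v : 'cV[R]_k | norm2 v <= 1]].

Definition closed_proper_convex (k : nat) (h : 'cV[R]_k -> \bar R) : Prop :=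
  [/\ forall x, h x != -oo%E,
      exists x, h x != +oo%E,
      lower_semicontinuous h &
      forall (x y : 'cV[R]_k) (l : R), 0 < l < 1 ->
        (h (l *: x + (1 - l) *: y)%R <= l%:E * h x + (1 - l)%:E * h y)%E ].

Definition strongly_convex (k : nat) (mu : R) (h : 'cV[R]_k -> \bar R) : Prop :=
  forall (x y : 'cV[R]_k) (l : R), 0 < l < 1 ->
    (h (l *: x + (1 - l) *: y)%R <=
       l%:E * h x + (1 - l)%:E * h y
       - (mu / 2 * l * (1 - l) * norm2 (x - y) ^+ 2)%:E)%E.

Definition grad (k : nat) (h : 'cV[R]_k -> R) (x : 'cV[R]_k) : 'cV[R]_k :=
  \col_(i < k) ('d h x (delta_mx i 0 : 'cV[R]_k)).

(* "f is (1/gamma)-smooth" in the paper's convention: gamma = 0 imposes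
   nothing; gamma > 0 means f is (finite-valued and) differentiable with a
   (1/gamma)-Lipschitz gradient w.r.t. the Euclidean norm. *)
Definition smooth_inv (k : nat) (gamma : R) (f : 'cV[R]_k -> \bar R) : Prop :=
  gamma = 0 \/
  (0 < gamma /\ exists h : 'cV[R]_k -> R,
     [/\ forall x, f x = (h x)%:E,
         forall x, differentiable h x &
         forall x y, norm2 (grad h x - grad h y) <= gamma^-1 * norm2 (x - y)]).

Definition conj_fun (k : nat) (f : 'cV[R]_k -> \bar R) (y : 'cV[R]_k) : \bar R :=
  ereal_sup [set ((dot y x)%:E - f x)%E | x in [set: 'cV[R]_k]].

(* is_prox h u v  <->  v = prox_h(u) = argmin_w { h(w) + 1/2 ||w - u||^2 }
   (v attains the minimum; for closed proper convex h the minimizer exists and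
   is unique, so this relation pins down the prox). *)
Definition is_prox (k : nat) (h : 'cV[R]_k -> \bar R) (u v : 'cV[R]_k) : Prop :=
  forall w : 'cV[R]_k,
    (h v + (2^-1 * norm2 (v - u) ^+ 2)%:E <= h w + (2^-1 * norm2 (w - u) ^+ 2)%:E)%E.

Definition scalef (k : nat) (c : R) (h : 'cV[R]_k -> \bar R) : 'cV[R]_k -> \bar R :=
  fun x => (c%:E * h x)%E.

(* B_{t-1} = sum_{k < t} beta_k  (so Bm 0 = B_{-1} = 0 and B_t = Bm t.+1). *)
Definition Bm (beta : nat -> R) (t : nat) : R := \sum_(k < t) beta k.

Definition saddleF (n d : nat) (A : 'M[R]_(n, d)) (f : 'cV[R]_n -> \bar R)
  (g : 'cV[R]_d -> \bar R) (x : 'cV[R]_d) (y : 'cV[R]_n) : \bar R :=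
  (g x + (dot y (A *m x))%:E - conj_fun f y)%E.

End DAPDDefs.

(* The third prox step says that x^t minimises the dual-averaging objective
     psi_t(w) = B_{t-1} g(w) + <sum_{k<t} beta_k A^T y^{k+1}, w> + |w - x^0|^2 / 2,
   which is (1 + B_{t-1} mu)-strongly convex.  Hence the potential
     Phi_t = psi_t(x^t) - psi_t(u) + |u - x^0|^2 / 2 - beta_t / (2 tau_t) |v - y^t|^2
   grows at step t by at least beta_t (F(xbar^{t+1}, v) - F(u, y^{t+1})): add beta_t times
   the three-point inequalities of the two other prox steps; the step-size conditions
   absorb the quadratic terms, and Young's inequality with eta_t tau_t ||A||^2 <= 1 absorbs
   the coupling <y^{t+1} - y^t, A (xbar^{t+1} - x^{t+1})>.  Telescoping bounds the weighted
   sum of gaps by |x^0 - u|^2 / 2 + beta_0 / (2 tau_0) |y^0 - v|^2, and Jensen's inequality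
   for the convex functions g and f^* passes to the averages.  Smoothness of f is used only
   to make f^* gamma-strongly convex. *)

From HB Require Import structures.
From mathcomp Require Import all_boot all_order all_algebra.
From mathcomp Require Import all_classical all_reals all_analysis.
From mathcomp Require Import ring lra.
Import Order.TTheory GRing.Theory Num.Theory.
Import numFieldNormedType.Exports.
Local Open Scope ring_scope.

Section Euclidean.
Context {R : realType} {k : nat}.
Implicit Types u v w : 'cV[R]_k.

Definition sqnorm u : R := dot u u.

Lemma dotC u v : dot u v = dot v u.
Proof. by apply: eq_bigr => i _; rewrite mulrC. Qed.

Lemma dotDl u v w : dot (u + v) w = dot u w + dot v w.
Proof. by rewrite /dot -big_split; apply: eq_bigr => i _; rewrite mxE mulrDl. Qed.

Lemma dotZl a u v : dot (a *: u) v = a * dot u v.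
Proof. by rewrite /dot mulr_sumr; apply: eq_bigr => i _; rewrite mxE mulrA. Qed.

Lemma dotNl u v : dot (- u) v = - dot u v.
Proof. by rewrite -scaleN1r dotZl mulN1r. Qed.

Lemma dotBl u v w : dot (u - v) w = dot u w - dot v w.
Proof. by rewrite dotDl dotNl. Qed.

Lemma dot0l v : dot 0 v = 0.
Proof. by rewrite -(scale0r 0) dotZl mul0r. Qed.

Lemma dotDr u v w : dot u (v + w) = dot u v + dot u w.
Proof. by rewrite dotC dotDl !(dotC u). Qed.

Lemma dotZr a u v : dot u (a *: v) = a * dot u v.
Proof. by rewrite dotC dotZl dotC. Qed.

Lemma dotBr u v w : dot u (v - w) = dot u v - dot u w.
Proof. by rewrite dotC dotBl !(dotC u). Qed.

Lemma dot_suml m (F : 'I_m -> 'cV[R]_k) v :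
  dot (\sum_(i < m) F i) v = \sum_(i < m) dot (F i) v.
Proof.
elim: m F => [|m IH] F; last by rewrite !big_ord_recr /= dotDl IH.
by rewrite !big_ord0 /dot big1 // => i _; rewrite mxE mul0r.
Qed.

Lemma sqnorm_ge0 u : 0 <= sqnorm u.
Proof. by apply: sumr_ge0 => i _; rewrite -expr2 sqr_ge0. Qed.

Lemma sqr_norm2 u : norm2 u ^+ 2 = sqnorm u.
Proof. by rewrite sqr_sqrtr // sqnorm_ge0. Qed.

Lemma sqnorm_eq0 u : (sqnorm u == 0) = (u == 0).
Proof.
apply/idP/eqP => [|->]; last by rewrite /sqnorm /dot big1 // => i _; rewrite mxE mul0r.
rewrite psumr_eq0 => [/allP u0|i _]; last by rewrite -expr2 sqr_ge0.
apply/matrixP => i j; rewrite (ord1 j) mxE.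
by apply/eqP; rewrite -sqrf_eq0 expr2; exact: implyP (u0 i (mem_index_enum i)) isT.
Qed.

Lemma sqnorm0 : sqnorm (0 : 'cV[R]_k) = 0.
Proof. by apply/eqP; rewrite sqnorm_eq0. Qed.

Lemma sqnormD u v : sqnorm (u + v) = sqnorm u + 2 * dot u v + sqnorm v.
Proof. by rewrite /sqnorm !dotDl !dotDr (dotC v u); ring. Qed.

Lemma sqnormB u v : sqnorm (u - v) = sqnorm u - 2 * dot u v + sqnorm v.
Proof. by rewrite /sqnorm !dotBl !dotBr (dotC v u); ring. Qed.

Lemma sqnormZ a u : sqnorm (a *: u) = a ^+ 2 * sqnorm u.
Proof. by rewrite /sqnorm dotZl dotZr mulrA expr2. Qed.

Lemma sqnorm_shift u v w :
  sqnorm (u - (v - w)) = sqnorm (u - v) + 2 * (dot w u - dot w v) + sqnorm w.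
Proof.
have -> : u - (v - w) = (u - v) + w by apply/matrixP => i j; rewrite !mxE; ring.
by rewrite sqnormD dotC dotBr.
Qed.

Lemma sqnormBC u v : sqnorm (u - v) = sqnorm (v - u).
Proof. by rewrite -opprB /sqnorm dotNl dotC dotNl opprK. Qed.

Lemma sqnorm_convex a u v :
  sqnorm (a *: u + (1 - a) *: v) = a * sqnorm u + (1 - a) * sqnorm v - a * (1 - a) * sqnorm (u - v).
Proof. by rewrite sqnormB sqnormD !sqnormZ dotZl dotZr; ring. Qed.

Lemma young_dot c u v : 0 < c -> 2 * dot u v <= c * sqnorm u + c^-1 * sqnorm v.
Proof.
move=> c_gt0; have := sqnorm_ge0 (c *: u - v).
rewrite sqnormB sqnormZ dotZl => H.
rewrite -subr_ge0; have -> : c * sqnorm u + c^-1 * sqnorm v - 2 * dot u v =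
          c^-1 * (c ^+ 2 * sqnorm u - 2 * (c * dot u v) + sqnorm v).
  by field; rewrite gt_eqF.
by rewrite mulr_ge0 // invr_ge0 ltW.
Qed.

Lemma dot_le_of_sqnorm_le r u v : 0 <= r -> sqnorm u <= r ^+ 2 * sqnorm v ->
  dot u v <= r * sqnorm v.
Proof.
rewrite le_eqVlt => /predU1P[<- | r_gt0] u_le.
  move: u_le; rewrite expr2 !mul0r => u_le0.
  have /eqP -> : u == 0 by rewrite -sqnorm_eq0 eq_le u_le0 sqnorm_ge0.
  by rewrite dot0l.
have rV_gt0 : 0 < r^-1 by rewrite invr_gt0.
have := young_dot _ u v rV_gt0; rewrite invrK.
have : r^-1 * sqnorm u <= r * sqnorm v by rewrite ler_pdivrMl // mulrA -expr2.
lra.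
Qed.

End Euclidean.

Lemma dot_trmx {R : realType} {n d} (A : 'M[R]_(n, d)) (y : 'cV[R]_n) (x : 'cV[R]_d) :
  dot (A^T *m y) x = dot y (A *m x).
Proof.
rewrite /dot; under eq_bigr => i _ do rewrite mxE big_distrl /=.
rewrite exchange_big /=; apply: eq_bigr => j _.
by rewrite mxE big_distrr /=; apply: eq_bigr => i _; rewrite mxE; ring.
Qed.

Section OperatorNorm.
Context {R : realType} {n d : nat} (A : 'M[R]_(n, d)).

Lemma sqr_entry_le_sqnorm {k} (v : 'cV[R]_k) j : v j 0 ^+ 2 <= sqnorm v.
Proof.
rewrite /sqnorm /dot (bigD1 j) //= -expr2 lerDl.
by apply: sumr_ge0 => i _; rewrite -expr2 sqr_ge0.
Qed.

Lemma opnorm2_has_ubound :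
  has_ubound [set norm2 (A *m v) | v in [set v : 'cV[R]_d | norm2 v <= 1]].
Proof.
pose M i : R := \sum_(j < d) `|A i j|.
exists (1 + \sum_(i < n) M i ^+ 2) => _ [v /= v_le1 <-].
have r_le (r : R) : 0 <= r -> r <= 1 + r ^+ 2 by nra.
apply: le_trans (r_le _ (sqrtr_ge0 _)) _; rewrite sqr_norm2 lerD2l.
apply: ler_sum => i _; rewrite -expr2 -real_normK ?num_real //.
rewrite ler_pXn2r ?nnegrE ?normr_ge0 ?sumr_ge0 // mxE.
apply: le_trans (ler_norm_sum _ _ _) (ler_sum _ _) => j _.
rewrite normrM ler_piMr // -(ler_pXn2r (n := 2)) ?nnegrE // expr1n real_normK ?num_real //.
by rewrite (le_trans (sqr_entry_le_sqnorm v j)) // -sqr_norm2 expr_le1 ?sqrtr_ge0.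
Qed.

Lemma sqnorm_mulmx_le e : sqnorm (A *m e) <= opnorm2 A ^+ 2 * sqnorm e.
Proof.
have [/eqP e0 | e_neq0] := eqVneq (sqnorm e) 0.
  by move: e0; rewrite sqnorm_eq0 => /eqP ->; rewrite mulmx0 !sqnorm0 mulr0.
set r := norm2 e.
have r_gt0 : 0 < r by rewrite sqrtr_gt0 lt_def e_neq0 sqnorm_ge0.
have unit_vec : norm2 (r^-1 *: e) <= 1.
  by rewrite /norm2 -/(sqnorm _) sqnormZ -sqr_norm2 -/r exprVn mulVf ?sqrtr1 // sqrf_eq0 gt_eqF.
have le_sup := ub_le_sup opnorm2_has_ubound (ex_intro2 _ _ (r^-1 *: e) unit_vec erefl).
have : sqnorm (A *m (r^-1 *: e)) <= opnorm2 A ^+ 2.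
  by rewrite -sqr_norm2 ler_pXn2r ?nnegrE ?sqrtr_ge0 ?(le_trans (sqrtr_ge0 _) le_sup).
by rewrite -scalemxAr sqnormZ exprVn mulrC ler_pdivrMr ?exprn_gt0 // /r sqr_norm2.
Qed.

Lemma young_dot_mulmx {eta tau : R} (a : 'cV[R]_n) (b : 'cV[R]_d) :
  0 < eta -> 0 < tau -> eta * tau * opnorm2 A ^+ 2 <= 1 ->
  2 * dot a (A *m b) <= tau^-1 * sqnorm a + eta^-1 * sqnorm b.
Proof.
move=> eta_gt0 tau_gt0 step_le.
have tauV_gt0 : 0 < tau^-1 by rewrite invr_gt0.
apply: le_trans (young_dot _ _ _ tauV_gt0) _; rewrite invrK lerD2l.
apply: le_trans (ler_wpM2l (ltW tau_gt0) (sqnorm_mulmx_le b)) _.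
by rewrite mulrA ler_wpM2r ?sqnorm_ge0 // -(ler_pM2l eta_gt0) mulfV ?gt_eqF // mulrA.
Qed.

End OperatorNorm.

Lemma le_of_le_addM01 {R : realFieldType} (a b K : R) :
  (forall l, 0 < l < 1 -> a <= b + l * K) -> a <= b.
Proof.
move=> small; apply/ler_addgt0Pr => e e_gt0.
pose l := Num.min 2^-1 (e / (`|K| + 1)).
have K1_gt0 : 0 < `|K| + 1 by rewrite ltr_pwDr.
have l_gt0 : 0 < l by rewrite lt_min invr_gt0 ltr0n divr_gt0.
have l_le : l * (`|K| + 1) <= e by rewrite -ler_pdivlMr // ge_min lexx orbT.
have l_lt1 : l < 1 by rewrite gt_min invf_lt1 ?ltr0n ?ltr1n.
apply: le_trans (small l _) _; first by rewrite l_gt0 l_lt1.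
rewrite lerD2l; apply: le_trans l_le.
have := ler_wpM2l (ltW l_gt0) (ler_norm K); rewrite mulrDr mulr1; lra.
Qed.

Section Prox.
Context {R : realType} {k : nat} {phi : 'cV[R]_k -> \bar R} {mu : R}.
Hypothesis phi_sc : strongly_convex mu phi.
Hypothesis phi_neq_ninfty : forall x, phi x != -oo%E.
Implicit Types u v w p q s : 'cV[R]_k.

Lemma prox_fin_num {c u v} w : 0 < c -> is_prox (scalef c phi) u v ->
  phi w \is a fin_num -> phi v \is a fin_num.
Proof.
move=> c_gt0 /(_ w) opt phiw; move: opt (phi_neq_ninfty v).
rewrite /scalef -(fineK phiw).
by case: (phi v) => // opt _; rewrite gt0_muley ?lte_fin // addye in opt.
Qed.

Lemma prox_variational {c u v} w : 0 < c -> is_prox (scalef c phi) u v ->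
  phi w \is a fin_num ->
  c * fine (phi v) + c * mu / 2 * sqnorm (w - v) <=
  c * fine (phi w) + dot (v - u) (w - v).
Proof.
move=> c_gt0 prox_v phiw.
have phiv := prox_fin_num w c_gt0 prox_v phiw.
(* Test the optimality of v against z = l w + (1 - l) v, divide by l and let l -> 0. *)
set a := fine (phi v); set b := fine (phi w); set X := sqnorm (w - v).
suff small l : 0 < l < 1 ->
    c * a <= c * b + dot (v - u) (w - v) - c * mu / 2 * X + l * ((c * mu + 1) / 2 * X).
  by move/le_of_le_addM01 in small; lra.
move=> /andP[l_gt0 l_lt1]; set z := l *: w + (1 - l) *: v.
have sc_z := phi_sc w v l; rewrite l_gt0 l_lt1 -(fineK phiw) -(fineK phiv) in sc_z.
have {}sc_z : (phi z <= (l * b + (1 - l) * a - mu / 2 * l * (1 - l) * X)%:E)%E.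
  by move: (sc_z isT); rewrite sqr_norm2 EFinB EFinD !EFinM.
have phiz : phi z \is a fin_num.
  by move: sc_z (phi_neq_ninfty z); case: (phi z).
have opt_z := prox_v z.
rewrite /scalef -(fineK phiz) -(fineK phiv) -!EFinM -!EFinD lee_fin !sqr_norm2 in opt_z.
have zu : z - u = (v - u) + l *: (w - v) by apply/matrixP => i j; rewrite !mxE; ring.
rewrite zu (sqnormD (v - u)) dotZr sqnormZ -/X -/a in opt_z.
rewrite -(fineK phiz) lee_fin in sc_z.
have sc_cz := ler_wpM2l (ltW c_gt0) sc_z.
rewrite -(ler_pM2l l_gt0); lra.
Qed.

Lemma prox_three_point {c u v} w : 0 < c -> is_prox (scalef c phi) u v ->
  phi w \is a fin_num ->
  c * fine (phi v) + 2^-1 * sqnorm (v - u) + (1 + c * mu) / 2 * sqnorm (w - v) <=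
  c * fine (phi w) + 2^-1 * sqnorm (w - u).
Proof.
move=> c_gt0 prox_v phiw; have := prox_variational w c_gt0 prox_v phiw.
have -> : w - u = (v - u) + (w - v) by apply/matrixP => i j; rewrite !mxE; ring.
rewrite (sqnormD (v - u)); lra.
Qed.

Lemma prox_shift_three_point {c p s v} w : 0 < c -> is_prox (scalef c phi) (p - s) v ->
  phi w \is a fin_num ->
  c * fine (phi v) + dot s v + 2^-1 * sqnorm (v - p) + (1 + c * mu) / 2 * sqnorm (w - v) <=
  c * fine (phi w) + dot s w + 2^-1 * sqnorm (w - p).
Proof.
move=> c_gt0 prox_v phiw; have := prox_three_point w c_gt0 prox_v phiw.
rewrite !sqnorm_shift; lra.
Qed.

Lemma prox_linear_three_point {c p q v} w : 0 < c -> is_prox (scalef c phi) (p - c *: q) v ->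
  phi w \is a fin_num ->
  fine (phi v) + dot q v + c^-1 / 2 * sqnorm (v - p) + (c^-1 + mu) / 2 * sqnorm (w - v) <=
  fine (phi w) + dot q w + c^-1 / 2 * sqnorm (w - p).
Proof.
move=> c_gt0 prox_v phiw; have := prox_shift_three_point w c_gt0 prox_v phiw.
have cV (r : R) : c * (c^-1 / 2 * r) = 2^-1 * r by field; rewrite gt_eqF.
have cVmu (r : R) : c * ((c^-1 + mu) / 2 * r) = (1 + c * mu) / 2 * r.
  by field; rewrite gt_eqF.
rewrite !dotZl => shifted; rewrite -(ler_pM2l c_gt0) !mulrDr !cV cVmu; lra.
Qed.

End Prox.

Section Smoothness.
Context {R : realType} {k : nat} (h : 'cV[R]_k -> R).

Lemma diff_grad p e : 'd h p e = dot (grad h p) e.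
Proof.
rewrite {1}(matrix_sum_delta e) linear_sum /dot; apply: eq_bigr => i _.
by rewrite big_ord1 linearZ /= mxE mulrC.
Qed.

Hypothesis h_diff : forall x, differentiable h x.

Lemma is_derive_line (x e : 'cV[R]_k) (s : R) :
  is_derive s 1 (fun s : R => h (x + s *: e)) (dot (grad h (x + s *: e)) e).
Proof.
set p := x + s *: e.
have quotE : (fun r : R => r^-1 *: (((fun s => h (x + s *: e)) \o shift s) (r *: 1) - h p)) =
             (fun r : R => r^-1 *: ((h \o shift p) (r *: e) - h p)).
  apply/funext => r /=; congr (_ *: (h _ - _)).
  by apply/matrixP => i j; rewrite !mxE -[r%:A]/(r * 1) mulr1; ring.
have der : derivable (fun s : R => h (x + s *: e)) s 1.
  by rewrite /derivable quotE; exact: diff_derivable.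
apply: DeriveDef => //.
by rewrite /derive quotE -/(derive h p e) deriveE // diff_grad.
Qed.

Lemma descent_lemma (L : R) (x z : 'cV[R]_k) : 0 <= L ->
  (forall x y, norm2 (grad h x - grad h y) <= L * norm2 (x - y)) ->
  h z <= h x + dot (grad h x) (z - x) + L / 2 * sqnorm (z - x).
Proof.
move=> L_ge0 lip; set e := z - x; set c0 := dot (grad h x) e.
pose psi := (fun s : R => h (x + s *: e)) - (c0 \*: id + (L / 2 * sqnorm e) \*: id ^+ 2).
have psi_deriv (s : R) :
    is_derive s 1 psi (dot (grad h (x + s *: e)) e - (c0 + L * sqnorm e * s)).
  apply: is_derive_eq; first by apply: is_deriveB; first exact: is_derive_line.
  have -> : c0%:A + (L / 2 * sqnorm e) *: (2 * s ^+ 1)%:A = c0 + L * sqnorm e * s :> R.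
    by rewrite -[LHS]/(c0 * 1 + L / 2 * sqnorm e * ((2 * s ^+ 1) * 1)); field.
  by [].
(* By the Lipschitz bound psi has a nonpositive derivative on ]0, 1[, so psi 1 <= psi 0. *)
have [c c01 mvt] := MVT ltr01 (fun s _ => psi_deriv s)
  (derivable_within_continuous (fun s _ => (psi_deriv s).(ex_derive))).
move: c01; rewrite in_itv /= => /andP[c_gt0 _].
have slope : dot (grad h (x + c *: e)) e - c0 <= L * c * sqnorm e.
  rewrite /c0 -dotBl; apply: dot_le_of_sqnorm_le; first by rewrite mulr_ge0 // ltW.
  have lipc : norm2 (grad h (x + c *: e) - grad h x) <= L * norm2 (c *: e).
    by have := lip (x + c *: e) x; rewrite [x + _]addrC addrK.
  rewrite exprMn -mulrA -sqnormZ -!sqr_norm2 -exprMn.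
  by rewrite ler_pXn2r ?nnegrE ?mulr_ge0 ?sqrtr_ge0.
have psi1 : psi 1 = h z - (c0 + L / 2 * sqnorm e).
  rewrite -[psi 1]/(h (x + 1 *: e) - (c0 * 1 + L / 2 * sqnorm e * (1 * 1))).
  by rewrite scale1r /e [x + _]addrC subrK !mulr1.
have psi0 : psi 0 = h x.
  rewrite -[psi 0]/(h (x + 0 *: e) - (c0 * 0 + L / 2 * sqnorm e * (0 * 0))).
  by rewrite scale0r addr0 !mulr0 addr0 subr0.
move: mvt; rewrite psi1 psi0 subr0 mulr1; lra.
Qed.

End Smoothness.

Section Conjugate.
Context {R : realType} {k : nat} {f : 'cV[R]_k -> \bar R}.

Lemma fenchel_young x y : f x \is a fin_num ->
  ((dot y x - fine (f x))%:E <= conj_fun f y)%E.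
Proof. by move=> fx; apply: ereal_sup_ubound; exists x => //; rewrite -(fineK fx). Qed.

Hypothesis f_neq_ninfty : forall x, f x != -oo%E.
Hypothesis f_dom : exists x, f x != +oo%E.

Lemma conj_fun_neq_ninfty y : conj_fun f y != -oo%E.
Proof.
have [x fx] := f_dom; have /(fenchel_young x y) : f x \is a fin_num.
  by rewrite fin_numE fx f_neq_ninfty.
by case: (conj_fun f y).
Qed.

Context {gamma : R}.
Hypothesis gamma_ge0 : 0 <= gamma.
Hypothesis f_smooth : smooth_inv gamma f.

Lemma conj_fun_ge_quadratic {x} : f x \is a fin_num -> exists G, forall y,
  ((dot y x - fine (f x) + gamma / 2 * sqnorm (y - G))%:E <= conj_fun f y)%E.
Proof.
move=> fx; case: f_smooth => [gamma0 | [gamma_gt0 [h [fh h_diff h_lip]]]].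
  by exists 0 => y; rewrite gamma0 !mul0r addr0; apply: fenchel_young.
exists (grad h x) => y; set G := grad h x; set z := x + gamma *: (y - G).
apply: le_trans (fenchel_young z y _); last by rewrite fh.
rewrite lee_fin !fh /=.
have gammaV_ge0 : 0 <= gamma^-1 by rewrite invr_ge0 ltW.
have := descent_lemma _ h_diff _ x z gammaV_ge0 h_lip.
have -> : z - x = gamma *: (y - G) by rewrite /z [x + _]addrC addrK.
have -> : dot y z = dot y x + gamma * dot y (y - G) by rewrite /z dotDr dotZr.
rewrite sqnormZ dotZr.
have -> : dot y (y - G) = sqnorm (y - G) + dot G (y - G) by rewrite /sqnorm dotBl; ring.
have -> : gamma^-1 / 2 * (gamma ^+ 2 * sqnorm (y - G)) = gamma / 2 * sqnorm (y - G).
  by field; rewrite gt_eqF.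
lra.
Qed.

(* f^* is a supremum of gamma-strongly convex functions of y. *)
Lemma conj_fun_strongly_convex : strongly_convex gamma (conj_fun f).
Proof.
move=> y1 y2 l /andP[l_gt0 l_lt1]; apply: ge_ereal_sup => _ [x _ <-].
have [fx_infty | fx_neq] := eqVneq (f x) +oo%E.
  by rewrite fx_infty addeNy leNye.
have fx : f x \is a fin_num by rewrite fin_numE fx_neq f_neq_ninfty.
have [G quad] := conj_fun_ge_quadratic fx.
move: (quad y1) (quad y2) (conj_fun_neq_ninfty y1) (conj_fun_neq_ninfty y2).
rewrite -(fineK fx) sqr_norm2.
case: (conj_fun f y1) => [a1| |] //; case: (conj_fun f y2) => [a2| |] //= ; last first.
- by move=> *; rewrite !gt0_muley ?lte_fin ?subr_gt0 // addye ?leey.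
- by move=> *; rewrite gt0_muley ?lte_fin // addye ?leey.
- by move=> *; rewrite gt0_muley ?lte_fin ?subr_gt0 // addey ?leey.
rewrite !lee_fin => le1 le2 _ _.
have := sqnorm_convex l (y1 - G) (y2 - G).
have -> : y1 - G - (y2 - G) = y1 - y2 by rewrite opprB addrA subrK.
rewrite dotDl !dotZl => convex_sq.
have := sqnorm_ge0 (l *: (y1 - G) + (1 - l) *: (y2 - G)); rewrite convex_sq => sq_ge0.
have l'_gt0 : 0 < 1 - l by rewrite subr_gt0.
have := mulr_ge0 (divr_ge0 gamma_ge0 (ler0n _ 2)) sq_ge0.
have := ler_wpM2l (ltW l_gt0) le1; have := ler_wpM2l (ltW l'_gt0) le2.
lra.
Qed.

End Conjugate.

Definition wavg {R : realType} {V : lmodType R} (w : nat -> R) m (z : nat -> V) : V :=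
  (Bm w m)^-1 *: \sum_(t < m) w t *: z t.

Section WeightedAverage.
Context {R : realType} {w : nat -> R}.

Lemma BmS m : Bm w m.+1 = Bm w m + w m.
Proof. by rewrite /Bm big_ord_recr. Qed.

Lemma Bm0 : Bm w 0 = 0.
Proof. by rewrite /Bm big_ord0. Qed.

Hypothesis w_gt0 : forall t, 0 < w t.

Lemma Bm_ge0 m : 0 <= Bm w m.
Proof. by apply: sumr_ge0 => t _; apply: ltW. Qed.

Lemma Bm_gt0 {m} : (0 < m)%N -> 0 < Bm w m.
Proof. by case: m => // m _; rewrite BmS ltr_wpDl ?Bm_ge0. Qed.

Lemma wavg1 {V : lmodType R} (z : nat -> V) : wavg w 1 z = z 0%N.
Proof. by rewrite /wavg /Bm !big_ord1 scalerA mulVf ?scale1r ?gt_eqF. Qed.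

Lemma wavgS {V : lmodType R} m (z : nat -> V) : (0 < m)%N ->
  wavg w m.+1 z = (Bm w m / Bm w m.+1) *: wavg w m z + (1 - Bm w m / Bm w m.+1) *: z m.
Proof.
move=> m_gt0; have B_gt0 := Bm_gt0 m_gt0; have B'_gt0 := Bm_gt0 (ltn0Sn m).
have -> : 1 - Bm w m / Bm w m.+1 = (Bm w m.+1)^-1 * w m.
  by rewrite BmS; field; rewrite -BmS gt_eqF.
rewrite /wavg big_ord_recr /= scalerDr !scalerA mulrAC mulfV ?gt_eqF ?mul1r //.
Qed.

Lemma wavg_cst {V : lmodType R} m (c : V) : (0 < m)%N -> wavg w m (fun=> c) = c.
Proof.
move=> m_gt0; rewrite /wavg -scaler_suml scalerA mulVf ?scale1r //.
by rewrite gt_eqF ?Bm_gt0.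
Qed.

Lemma wavgB {V : lmodType R} m (z1 z2 : nat -> V) :
  wavg w m (fun t => z1 t - z2 t) = wavg w m z1 - wavg w m z2.
Proof.
by rewrite /wavg -scalerBr -sumrB; congr (_ *: _); apply: eq_bigr => t _; rewrite scalerBr.
Qed.

Lemma wavgD {V : lmodType R} m (z1 z2 : nat -> V) :
  wavg w m (fun t => z1 t + z2 t) = wavg w m z1 + wavg w m z2.
Proof.
by rewrite /wavg -scalerDr -big_split; congr (_ *: _); apply: eq_bigr => t _; rewrite scalerDr.
Qed.

Context {k : nat}.

Definition econvex (h : 'cV[R]_k -> \bar R) : Prop :=
  forall (x y : 'cV[R]_k) (l : R), 0 < l < 1 ->
    (h (l *: x + (1 - l) *: y)%R <= l%:E * h x + (1 - l)%:E * h y)%E.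

Lemma strongly_convex_econvex {mu : R} {h} : 0 <= mu -> strongly_convex mu h -> econvex h.
Proof.
move=> mu_ge0 h_sc x y l l01; apply: le_trans (h_sc x y l l01) _.
rewrite geeDl // -EFinN lee_fin oppr_le0; case/andP: l01 => l_gt0 l_lt1.
have l_ge0 := ltW l_gt0; have l'_ge0 : 0 <= 1 - l by rewrite subr_ge0 ltW.
by rewrite mulr_ge0 ?sqr_ge0 // !mulr_ge0 // invr_ge0.
Qed.

Lemma jensen {h m} {z : nat -> 'cV[R]_k} : econvex h -> (0 < m)%N ->
  (forall t, (t < m)%N -> h (z t) \is a fin_num) ->
  (h (wavg w m z) <= (wavg w m (fun t => fine (h (z t))))%:E)%E.
Proof.
move=> h_convex; elim: m => [//|[_ _ fin | m IH _ fin]].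
  by rewrite !wavg1 fineK ?fin.
have B_gt0 := Bm_gt0 (ltn0Sn m); have B'_gt0 := Bm_gt0 (ltn0Sn m.+1).
set l := Bm w m.+1 / Bm w m.+2.
have l01 : 0 < l < 1.
  by rewrite divr_gt0 //= ltr_pdivrMr // mul1r (BmS m.+1) ltrDl.
rewrite !(wavgS m.+1) // -/l; apply: le_trans (h_convex _ _ _ l01) _; clearbody l.
have scaleE (a b : R) : a *: b = a * b by [].
rewrite -{1}(fineK (fin m.+1 _)) // -EFinM !scaleE EFinD.
case/andP: l01 => l_gt0 l_lt1.
apply: leeD2r; rewrite EFinM lee_pmul2l ?lte_fin //.
exact: IH (fun t lt_tm => fin t (ltnW lt_tm)).
Qed.

Lemma jensen_fin_num {h m} {z : nat -> 'cV[R]_k} : econvex h -> (forall x, h x != -oo%E) ->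
  (0 < m)%N -> (forall t, (t < m)%N -> h (z t) \is a fin_num) -> h (wavg w m z) \is a fin_num.
Proof.
move=> h_convex h_neq_ninfty m_gt0 fin.
by move: (jensen h_convex m_gt0 fin) (h_neq_ninfty (wavg w m z)); case: (h _).
Qed.

End WeightedAverage.

Section SaddleAverage.
Context {R : realType} {n d : nat} (A : 'M[R]_(n, d)).
Context {f : 'cV[R]_n -> \bar R} {g : 'cV[R]_d -> \bar R}.

Lemma saddleF_EFin {x y} : g x \is a fin_num -> conj_fun f y \is a fin_num ->
  saddleF A f g x y = (fine (g x) + dot y (A *m x) - fine (conj_fun f y))%:E.
Proof. by move=> gx fy; rewrite /saddleF -(fineK gx) -(fineK fy). Qed.

Context {w : nat -> R} {m : nat}.
Hypothesis w_gt0 : forall t, 0 < w t.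
Hypothesis m_gt0 : (0 < m)%N.

Lemma eq_wavg {V : lmodType R} (z1 z2 : nat -> V) :
  (forall t, (t < m)%N -> z1 t = z2 t) -> wavg w m z1 = wavg w m z2.
Proof. by move=> eq_z; congr (_ *: _); apply: eq_bigr => t _; rewrite eq_z. Qed.

Lemma dot_wavgl {k} (z : nat -> 'cV[R]_k) v :
  dot (wavg w m z) v = wavg w m (fun t => dot (z t) v).
Proof.
rewrite /wavg dotZl dot_suml; congr (_ * _).
by apply: eq_bigr => t _; rewrite dotZl.
Qed.

Lemma dot_wavgr {k} (z : nat -> 'cV[R]_k) v :
  dot v (wavg w m z) = wavg w m (fun t => dot v (z t)).
Proof. by rewrite dotC dot_wavgl; apply: eq_wavg => t _; rewrite dotC. Qed.

Lemma mulmx_wavg (z : nat -> 'cV[R]_d) : A *m wavg w m z = wavg w m (fun t => A *m z t).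
Proof.
rewrite /wavg -scalemxAr mulmx_sumr; congr (_ *: _).
by apply: eq_bigr => t _; rewrite scalemxAr.
Qed.

Hypothesis g_convex : econvex g.
Hypothesis conj_convex : econvex (conj_fun f).
Hypothesis g_neq_ninfty : forall x, g x != -oo%E.
Hypothesis conj_neq_ninfty : forall y, conj_fun f y != -oo%E.

Lemma saddleF_wavg_le (xs : nat -> 'cV[R]_d) (ys : nat -> 'cV[R]_n) u v :
  (forall t, (t < m)%N -> g (xs t) \is a fin_num) ->
  (forall t, (t < m)%N -> conj_fun f (ys t) \is a fin_num) ->
  g u \is a fin_num -> conj_fun f v \is a fin_num ->
  (saddleF A f g (wavg w m xs) v - saddleF A f g u (wavg w m ys) <=
   (wavg w m (fun t => fine (saddleF A f g (xs t) v) - fine (saddleF A f g u (ys t))))%:E)%E.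
Proof.
move=> xs_fin ys_fin gu fv.
have Jg := jensen w_gt0 g_convex m_gt0 xs_fin.
have Jf := jensen w_gt0 conj_convex m_gt0 ys_fin.
have gx := jensen_fin_num w_gt0 g_convex g_neq_ninfty m_gt0 xs_fin.
have fy := jensen_fin_num w_gt0 conj_convex conj_neq_ninfty m_gt0 ys_fin.
rewrite !saddleF_EFin // -EFinB lee_fin.
have -> : wavg w m (fun t => fine (saddleF A f g (xs t) v) - fine (saddleF A f g u (ys t))) =
    wavg w m (fun t => (fine (g (xs t)) + dot v (A *m xs t) - fine (conj_fun f v))
                       - (fine (g u) + dot (ys t) (A *m u) - fine (conj_fun f (ys t)))).
  by apply: eq_wavg => t lt_tm; rewrite !saddleF_EFin ?xs_fin ?ys_fin.
rewrite mulmx_wavg dot_wavgr dot_wavgl.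
move: Jg Jf; set xh := wavg w m xs; set yh := wavg w m ys.
rewrite -(fineK gx) -(fineK fy) !lee_fin.
rewrite !wavgB !wavgD !wavg_cst //; lra.
Qed.

End SaddleAverage.

Section DAPD.
Context {R : realType} {n d : nat} {A : 'M[R]_(n, d)}.
Context {f : 'cV[R]_n -> \bar R} {g : 'cV[R]_d -> \bar R} {gamma mu : R}.
Context {beta eta tau : nat -> R} {T : nat}.
Context {xbar x : nat -> 'cV[R]_d} {y : nat -> 'cV[R]_n} {u : 'cV[R]_d} {v : 'cV[R]_n}.

Hypothesis f_neq_ninfty : forall z, f z != -oo%E.
Hypothesis f_dom : exists z, f z != +oo%E.
Hypothesis gamma_ge0 : 0 <= gamma.
Hypothesis f_smooth : smooth_inv gamma f.
Hypothesis g_neq_ninfty : forall z, g z != -oo%E.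
Hypothesis mu_ge0 : 0 <= mu.
Hypothesis g_sc : strongly_convex mu g.
Hypothesis beta_gt0 : forall t, 0 < beta t.
Hypothesis eta_gt0 : forall t, 0 < eta t.
Hypothesis tau_gt0 : forall t, 0 < tau t.
Hypothesis step_sizes : forall t, (t < T)%N ->
  [/\ beta t <= eta t * (1 + Bm beta t * mu),
      eta t * tau t * opnorm2 A ^+ 2 <= 1 &
      beta t.+1 / tau t.+1 <= beta t / tau t * (1 + gamma * tau t)].
Hypothesis iterates : forall t, (t < T)%N ->
  [/\ is_prox (scalef (eta t) g) (x t - eta t *: (A^T *m y t)) (xbar t.+1),
      is_prox (scalef (tau t) (conj_fun f)) (y t + tau t *: (A *m xbar t.+1)) (y t.+1) &
      is_prox (scalef (Bm beta t.+1) g)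
        (x 0 - \sum_(k < t.+1) beta k *: (A^T *m y k.+1)) (x t.+1)].
Hypothesis gu_fin : g u \is a fin_num.
Hypothesis fv_fin : conj_fun f v \is a fin_num.

Let conj_sc := conj_fun_strongly_convex f_neq_ninfty f_dom gamma_ge0 f_smooth.
Let conj_neq_ninfty := conj_fun_neq_ninfty f_neq_ninfty f_dom.
Let conj_convex := strongly_convex_econvex gamma_ge0 conj_sc.

Lemma dapd_primal_fin_num t : (t < T)%N ->
  g (xbar t.+1) \is a fin_num /\ g (x t.+1) \is a fin_num.
Proof.
move=> lt_tT; have [prox_xbar _ prox_x] := iterates t lt_tT.
have B_gt0 := Bm_gt0 beta_gt0 (ltn0Sn t).
split; first by have := prox_fin_num g_neq_ninfty u (eta_gt0 t) prox_xbar gu_fin.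
by have := prox_fin_num g_neq_ninfty u B_gt0 prox_x gu_fin.
Qed.

Lemma dapd_dual_fin_num t : (t < T)%N -> conj_fun f (y t.+1) \is a fin_num.
Proof.
move=> lt_tT; have [_ prox_y _] := iterates t lt_tT.
by have := prox_fin_num conj_neq_ninfty v (tau_gt0 t) prox_y fv_fin.
Qed.

Definition dual_aggregate t := \sum_(k < t) beta k *: (A^T *m y k.+1).

Definition da_objective t w := Bm beta t * fine (g w) + dot (dual_aggregate t) w + 2^-1 * sqnorm (w - x 0).

Definition dapd_potential t :=
  da_objective t (x t) - da_objective t u + 2^-1 * sqnorm (u - x 0) - beta t / tau t / 2 * sqnorm (v - y t).

Lemma da_objectiveS t w : da_objective t.+1 w = da_objective t w + beta t * (fine (g w) + dot (y t.+1) (A *m w)).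
Proof. by rewrite /da_objective /dual_aggregate BmS big_ord_recr /= dotDl dotZl dot_trmx; ring. Qed.

Lemma da_objective_min t w : (t <= T)%N -> g w \is a fin_num ->
  da_objective t (x t) + (1 + Bm beta t * mu) / 2 * sqnorm (w - x t) <= da_objective t w.
Proof.
case: t => [_ _ | t lt_tT gw].
  rewrite /da_objective /dual_aggregate Bm0 big_ord0 !mul0r !(dot0l, add0r) subrr sqnorm0 mulr0; lra.
have [_ _ prox_x] := iterates t lt_tT.
by have := prox_shift_three_point g_sc g_neq_ninfty w (Bm_gt0 beta_gt0 (ltn0Sn t)) prox_x gw.
Qed.

Lemma dapd_primal_step t : (t < T)%N ->
  fine (g (xbar t.+1)) + dot (y t) (A *m xbar t.+1) + (eta t)^-1 / 2 * sqnorm (xbar t.+1 - x t)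
    + ((eta t)^-1 + mu) / 2 * sqnorm (x t.+1 - xbar t.+1) <=
  fine (g (x t.+1)) + dot (y t) (A *m x t.+1) + (eta t)^-1 / 2 * sqnorm (x t.+1 - x t).
Proof.
move=> lt_tT; have [prox_xbar _ _] := iterates t lt_tT.
have [_ X_fin] := dapd_primal_fin_num t lt_tT.
have := prox_linear_three_point g_sc g_neq_ninfty (x t.+1) (eta_gt0 t) prox_xbar X_fin.
by rewrite !dot_trmx.
Qed.

Lemma dapd_dual_step t : (t < T)%N ->
  fine (conj_fun f (y t.+1)) - dot (y t.+1) (A *m xbar t.+1)
    + (tau t)^-1 / 2 * sqnorm (y t.+1 - y t) + ((tau t)^-1 + gamma) / 2 * sqnorm (v - y t.+1) <=
  fine (conj_fun f v) - dot v (A *m xbar t.+1) + (tau t)^-1 / 2 * sqnorm (v - y t).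
Proof.
move=> lt_tT; have [_ prox_y _] := iterates t lt_tT.
have shift : y t + tau t *: (A *m xbar t.+1) = y t - tau t *: - (A *m xbar t.+1).
  by rewrite scalerN opprK.
rewrite shift in prox_y.
have := prox_linear_three_point conj_sc conj_neq_ninfty v (tau_gt0 t) prox_y fv_fin.
by rewrite !dotNl !(dotC (A *m xbar t.+1)).
Qed.

Lemma dapd_potential_step t : (t < T)%N ->
  beta t * (fine (saddleF A f g (xbar t.+1) v) - fine (saddleF A f g u (y t.+1))) <=
  dapd_potential t.+1 - dapd_potential t.
Proof.
move=> lt_tT; have [beta_le step_le ratio_le] := step_sizes t lt_tT.
have [xbar_fin x_fin] := dapd_primal_fin_num t lt_tT.
have y_fin := dapd_dual_fin_num t lt_tT.
have beta_ge0 := ltW (beta_gt0 t).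
have sq2_ge0 k (z : 'cV[R]_k) : 0 <= sqnorm z / 2 by rewrite divr_ge0 ?sqnorm_ge0.
have coupling := young_dot_mulmx A (y t.+1 - y t) (xbar t.+1 - x t.+1)
  (eta_gt0 t) (tau_gt0 t) step_le.
rewrite mulmxBr dotBl !dotBr (sqnormBC (xbar t.+1)) in coupling.
have {}beta_le : beta t / eta t <= 1 + Bm beta t * mu by rewrite ler_pdivrMr // mulrC.
have {}ratio_le : beta t.+1 / tau t.+1 <= beta t * ((tau t)^-1 + gamma).
  suff -> : beta t * ((tau t)^-1 + gamma) = beta t / tau t * (1 + gamma * tau t) by [].
  by field; rewrite gt_eqF.
(* beta t times the two prox inequalities; the step-size conditions absorb the rest. *)
have := ler_wpM2l beta_ge0 (dapd_primal_step t lt_tT).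
have := ler_wpM2l beta_ge0 (dapd_dual_step t lt_tT).
have := da_objective_min t (x t.+1) (ltnW lt_tT) x_fin.
have := ler_wpM2r (sq2_ge0 _ (x t.+1 - x t)) beta_le.
have := ler_wpM2r (sq2_ge0 _ (v - y t.+1)) ratio_le.
have := ler_wpM2l (divr_ge0 beta_ge0 (ler0n _ 2)) coupling.
have : 0 <= beta t * ((eta t)^-1 / 2 * sqnorm (xbar t.+1 - x t)).
  by rewrite !mulr_ge0 ?sqnorm_ge0 // invr_ge0 ltW.
have : 0 <= beta t * (mu / 2 * sqnorm (x t.+1 - xbar t.+1)).
  by rewrite !mulr_ge0 ?sqnorm_ge0.
rewrite /dapd_potential !da_objectiveS !saddleF_EFin //=; lra.
Qed.

Lemma dapd_potential0 : dapd_potential 0 = - (beta 0 / tau 0 / 2 * sqnorm (v - y 0)).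
Proof.
rewrite /dapd_potential /da_objective /dual_aggregate Bm0 big_ord0 !mul0r !dot0l subrr sqnorm0; ring.
Qed.

Lemma dapd_potentialT_le : dapd_potential T <= 2^-1 * sqnorm (u - x 0).
Proof.
have := da_objective_min T u (leqnn T) gu_fin.
have : 0 <= (1 + Bm beta T * mu) / 2 * sqnorm (u - x T).
  by rewrite mulr_ge0 ?sqnorm_ge0 // divr_ge0 // addr_ge0 // mulr_ge0 // Bm_ge0.
have : 0 <= beta T / tau T / 2 * sqnorm (v - y T).
  by rewrite !mulr_ge0 ?sqnorm_ge0 ?invr_ge0 // ltW.
rewrite /dapd_potential; lra.
Qed.

Lemma dapd_weighted_gap_sum_le :
  \sum_(t < T) beta t * (fine (saddleF A f g (xbar t.+1) v) - fine (saddleF A f g u (y t.+1))) <=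
  beta 0 / tau 0 / 2 * sqnorm (v - y 0) + 2^-1 * sqnorm (u - x 0).
Proof.
apply: (@le_trans _ _ (\sum_(t < T) (dapd_potential t.+1 - dapd_potential t))).
  by apply: ler_sum => t _; apply: dapd_potential_step.
rewrite -(big_mkord xpredT (fun t => dapd_potential t.+1 - dapd_potential t)) telescope_sumr //.
by have := dapd_potentialT_le; rewrite dapd_potential0; lra.
Qed.

Lemma dapd_conj_avg_fin_num : (0 < T)%N ->
  conj_fun f (wavg beta T (fun t => y t.+1)) \is a fin_num.
Proof.
move=> T_gt0.
by have := jensen_fin_num beta_gt0 conj_convex conj_neq_ninfty T_gt0 dapd_dual_fin_num.
Qed.

Lemma dapd_saddle_gap_le : (0 < T)%N ->
  (saddleF A f g (wavg beta T (fun t => xbar t.+1)) v -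
   saddleF A f g u (wavg beta T (fun t => y t.+1)) <=
   ((Bm beta T)^-1 * (beta 0 / (2 * tau 0) * norm2 (y 0 - v) ^+ 2
                      + 2^-1 * norm2 (x 0 - u) ^+ 2))%:E)%E.
Proof.
move=> T_gt0; have g_convex := strongly_convex_econvex mu_ge0 g_sc.
apply: le_trans (saddleF_wavg_le A beta_gt0 T_gt0 g_convex conj_convex g_neq_ninfty
  conj_neq_ninfty (fun t => xbar t.+1) (fun t => y t.+1) u v
  (fun t lt_tT => (dapd_primal_fin_num t lt_tT).1) dapd_dual_fin_num gu_fin fv_fin) _.
rewrite lee_fin /wavg ler_wpM2l ?invr_ge0 ?Bm_ge0 //.
have -> : beta 0 / (2 * tau 0) = beta 0 / tau 0 / 2 by rewrite invfM [2^-1 * _]mulrC mulrA.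
rewrite !sqr_norm2 (sqnormBC (y 0)) (sqnormBC (x 0)).
exact: dapd_weighted_gap_sum_le.
Qed.

End DAPD.

Theorem theorem2p3 (R : realType) (n d : nat) (A : 'M[R]_(n, d))
  (f : 'cV[R]_n -> \bar R) (g : 'cV[R]_d -> \bar R) (gamma mu : R)
  (beta eta tau : nat -> R) (T : nat)
  (xbar x : nat -> 'cV[R]_d) (y : nat -> 'cV[R]_n) :
  closed_proper_convex f -> closed_proper_convex g ->
  0 <= gamma -> smooth_inv gamma f ->
  0 <= mu -> strongly_convex mu g ->
  (1 <= T)%N ->
  (forall t, 0 < beta t) -> (forall t, 0 < eta t) -> (forall t, 0 < tau t) ->
  (forall t, (t < T)%N ->
     [/\ beta t <= eta t * (1 + Bm beta t * mu),
         eta t * tau t * opnorm2 A ^+ 2 <= 1 &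
         beta t.+1 / tau t.+1 <= beta t / tau t * (1 + gamma * tau t)]) ->
  (forall t, (t < T)%N ->
     [/\ is_prox (scalef (eta t) g) (x t - eta t *: (A^T *m y t)) (xbar t.+1),
         is_prox (scalef (tau t) (conj_fun f)) (y t + tau t *: (A *m xbar t.+1)) (y t.+1) &
         is_prox (scalef (Bm beta t.+1) g)
           (x 0 - \sum_(k < t.+1) beta k *: (A^T *m y k.+1)) (x t.+1)]) ->
  let xhat := (Bm beta T)^-1 *: \sum_(t < T) beta t *: xbar t.+1 in
  let yhat := (Bm beta T)^-1 *: \sum_(t < T) beta t *: y t.+1 in
  forall (u : 'cV[R]_d) (v : 'cV[R]_n),
    (saddleF A f g xhat v - saddleF A f g u yhat <=
      ((Bm beta T)^-1 * (beta 0 / (2 * tau 0) * norm2 (y 0 - v) ^+ 2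
                         + 2^-1 * norm2 (x 0 - u) ^+ 2))%:E)%E.
Proof.
move=> [f_neq_ninfty f_dom _ _] [g_neq_ninfty _ _ _] gamma_ge0 f_smooth mu_ge0 g_sc
  T_gt0 beta_gt0 eta_gt0 tau_gt0 step_sizes iterates xhat yhat u v.
have [fv_infty | fv_neq] := eqVneq (conj_fun f v) +oo%E.
  by rewrite /saddleF fv_infty addeNy addNye leNye.
have fv_fin : conj_fun f v \is a fin_num.
  by rewrite fin_numE fv_neq conj_fun_neq_ninfty.
have [gu_infty | gu_neq] := eqVneq (g u) +oo%E.
  have := dapd_conj_avg_fin_num f_neq_ninfty f_dom gamma_ge0 f_smooth beta_gt0 tau_gt0
    iterates fv_fin T_gt0.
  rewrite -/yhat /saddleF gu_infty => /fineK <-.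
  by rewrite addye // addeNy leNye.
have gu_fin : g u \is a fin_num by rewrite fin_numE gu_neq g_neq_ninfty.
exact: (dapd_saddle_gap_le f_neq_ninfty f_dom gamma_ge0 f_smooth g_neq_ninfty mu_ge0 g_sc
  beta_gt0 eta_gt0 tau_gt0 step_sizes iterates gu_fin fv_fin T_gt0).
Qed.
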